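(* Let the weights be $a_j=1/j$. (i) For fixed $n\ge1$ and $k\to\infty$, $k-S_{n,k}$ converges in distribution to $D_n=B_1+B_2+\cdots+B_n$, where $B_j$ are independent Bernoulli random variables with $\mathbb P\{B_j=1\}=1/j$; the law of $D_n$ is $\mathbb P\{D_n=\ell\}=\zeta_{n-1}(\{1\}_{\ell-1})/n$ for $1\le\ell\le n$. (ii) For fixed $k\ge1$ and $n\to\infty$, $S_{n,k}\to0$ in distribution.
   Context: For $\vec\ell=(\ell_1,\dots,\ell_k)$ with $n\ge\ell_1\ge\cdots\ge\ell_k\ge1$ let $\sigma(\vec\ell)=|\{1\le j\le k-1:\ell_j=\ell_{j+1}\}|$, and $\theta_{n;k}(t)=\sum_{n\ge\ell_1\ge\cdots\ge\ell_k\ge1}t^{\sigma(\vec\ell)}\prod_i\ell_i^{-1}$. $S_{n,k}$ is the random variable with $\mathbb P\{S_{n,k}=j\}=[t^j]\theta_{n;k}(t)/\theta_{n;k}(1)$. $\zeta_{m}(\{1\}_r)=\sum_{m\ge\ell_1>\cdots>\ell_r\ge1}\prod_i\ell_i^{-1}$, with $\zeta_m(\{1\}_0)=1$ (also for $m=0$). *)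

From Stdlib Require Import Reals Arith List.
Import ListNotations.
Open Scope R_scope.

Fixpoint tuples (n k : nat) : list (list nat) :=
  match k with
  | O => [ [] ]
  | S k' => flat_map (fun l => map (fun a => a :: l) (seq 1 n)) (tuples n k')
  end.

Fixpoint nonincb (l : list nat) : bool :=
  match l with
  | x :: ((y :: _) as t) => Nat.leb y x && nonincb t
  | _ => true
  end.

Fixpoint decb (l : list nat) : bool :=
  match l with
  | x :: ((y :: _) as t) => Nat.ltb y x && decb t
  | _ => true
  end.

Fixpoint sigma (l : list nat) : nat :=
  match l with
  | x :: ((y :: _) as t) => (if Nat.eqb x y then 1 else 0) + sigma t
  | _ => 0
  end.

Definition weight (l : list nat) : R :=
  fold_right Rmult 1 (map (fun a => / INR a) l).

Definition sumR (l : list R) : R := fold_right Rplus 0 l.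

Definition wdec (n k : nat) : list (list nat) := filter nonincb (tuples n k).

(* [t^j] theta_{n;k}(t) *)
Definition theta_coef (n k j : nat) : R :=
  sumR (map weight (filter (fun l => Nat.eqb (sigma l) j) (wdec n k))).

Definition theta1 (n k : nat) : R := sumR (map weight (wdec n k)).

(* P{S_{n,k} = j} *)
Definition PS (n k j : nat) : R := theta_coef n k j / theta1 n k.

(* P{k - S_{n,k} = l} (S_{n,k} is a nonnegative integer) *)
Definition PkminusS (n k l : nat) : R :=
  if Nat.leb l k then PS n k (k - l) else 0.

(* law of D_n = B_1 + ... + B_n, B_j independent Bernoulli(1/j):
   convolution of the laws *)
Fixpoint PD (n l : nat) : R :=
  match n with
  | O => if Nat.eqb l 0 then 1 else 0
  | S m =>
      (1 - / INR (S m)) * PD m l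
      + match l with O => 0 | S l' => / INR (S m) * PD m l' end
  end.

(* zeta_m({1}_r) = sum_{m >= l_1 > ... > l_r >= 1} prod 1/l_i ; = 1 for r = 0 *)
Definition zeta1 (m r : nat) : R :=
  sumR (map weight (filter decb (tuples m r))).

From Pilot Require Import Defs.
From Stdlib Require Import Reals List Lia Lra.
From Coquelicot Require Import Coquelicot.
Import ListNotations.
Open Scope bool_scope.
Open Scope R_scope.

(* Let A(n,k,d) be the total weight prod_i 1/l_i of the sequences n >= l_1 >= ... >= l_k >= 1
   taking exactly d distinct values, so that [t^j] theta_{n;k} = A(n,k,k-j),
   theta_{n;k}(1) = sum_d A(n,k,d) and zeta_m({1}_r) = A(m,r,r).  Splitting off the leading
   block of entries equal to n, the weight B_k of those with l_1 = n obeys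
   B_{k+1} = (B_k + A(n-1,k,d-1)) / n, a contraction for n >= 2.  By induction on n this gives
   A(n,k,d) -> n P{D_n = d} as k -> oo, since both sides obey the recursion that adds the
   Bernoulli(1/n) variable B_n; hence theta_{n;k}(1) -> n and (i).  The same recursion in n
   shows n P{D_n = l} = A(n-1,l-1,l-1).  For (ii), A(n,k,k) = e_k(1, 1/2, ..., 1/n) grows
   without bound in n (like a harmonic tail), and Stolz-Cesaro, by induction on k, gives
   A(n,j,d) / A(n,k,k) -> 0 whenever d < k: all the mass of S_{n,k} moves to 0. *)

Fixpoint sum1n (f : nat -> R) (n : nat) : R :=
  match n with O => 0 | S m => sum1n f m + f (S m) end.

Lemma sum1n_ext_in f g n :
  (forall h, (1 <= h <= n)%nat -> f h = g h) -> sum1n f n = sum1n g n.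
Proof.
  induction n as [|n IH]; intros Hfg; cbn [sum1n]; [reflexivity|].
  f_equal; [apply IH; intros h Hh |]; apply Hfg; lia.
Qed.

Lemma sum1n_0 n : sum1n (fun _ => 0) n = 0.
Proof. induction n as [|n IH]; cbn [sum1n]; [reflexivity | rewrite IH; ring]. Qed.

Lemma sum1n_plus f g n : sum1n (fun h => f h + g h) n = sum1n f n + sum1n g n.
Proof. induction n as [|n IH]; cbn [sum1n]; [ring | rewrite IH; ring]. Qed.

Lemma sum1n_scal c f n : sum1n (fun h => c * f h) n = c * sum1n f n.
Proof. induction n as [|n IH]; cbn [sum1n]; [ring | rewrite IH; ring]. Qed.

Lemma sum1n_indicator g a n :
  (1 <= a <= n)%nat -> sum1n (fun h => if Nat.eqb h a then g else 0) n = g.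
Proof.
  induction n as [|n IH]; intros Ha; [lia|]. cbn [sum1n].
  destruct (Nat.eqb_spec (S n) a) as [<-|Hne].
  - rewrite (sum1n_ext_in _ (fun _ => 0)), sum1n_0; [ring|].
    intros h Hh. destruct (Nat.eqb_spec h (S n)); [lia | reflexivity].
  - rewrite IH by lia. ring.
Qed.

Lemma sum1n_lt f a n :
  (a <= n)%nat -> sum1n (fun h => if Nat.ltb h a then f h else 0) n = sum1n f (pred a).
Proof.
  induction n as [|n IH]; intros Ha.
  - replace a with O by lia. reflexivity.
  - cbn [sum1n]. destruct (Nat.eq_dec a (S n)) as [->|Hne].
    + rewrite Nat.ltb_irrefl, Rplus_0_r. apply sum1n_ext_in. intros h Hh.
      rewrite (proj2 (Nat.ltb_lt h (S n))) by lia. reflexivity.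
    + rewrite IH by lia. rewrite (proj2 (Nat.ltb_nlt (S n) a)) by lia. apply Rplus_0_r.
Qed.

Lemma sumR_app (l1 l2 : list R) : sumR (l1 ++ l2) = sumR l1 + sumR l2.
Proof. induction l1 as [|x l1 IH]; simpl; [ring | rewrite IH; ring]. Qed.

Lemma sumR_map_ext_in {A} (f g : A -> R) L :
  (forall x, In x L -> f x = g x) -> sumR (map f L) = sumR (map g L).
Proof. induction L as [|x L IH]; simpl; intros Hfg; [reflexivity | rewrite Hfg, IH; auto]. Qed.

Lemma sumR_map_filter {A} (f : A -> R) (p : A -> bool) L :
  sumR (map f (filter p L)) = sumR (map (fun x => if p x then f x else 0) L).
Proof. induction L as [|x L IH]; simpl; [reflexivity|]. destruct (p x); simpl; rewrite IH; ring. Qed.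

Lemma sumR_map_flat_map {A B} (F : B -> R) (g : A -> list B) L :
  sumR (map F (flat_map g L)) = sumR (map (fun x => sumR (map F (g x))) L).
Proof. induction L as [|x L IH]; simpl; [reflexivity|]. rewrite map_app, sumR_app, IH. reflexivity. Qed.

Lemma sumR_map_seq1 f n : sumR (map f (seq 1 n)) = sum1n f n.
Proof.
  induction n as [|n IH]; [reflexivity|].
  rewrite seq_S, map_app, sumR_app, IH. simpl. ring.
Qed.

Lemma sumR_map_plus {A} (f g : A -> R) L :
  sumR (map (fun x => f x + g x) L) = sumR (map f L) + sumR (map g L).
Proof. induction L as [|x L IH]; simpl; [ring | rewrite IH; ring]. Qed.

Lemma sumR_map_scal {A} c (f : A -> R) L :
  sumR (map (fun x => c * f x) L) = c * sumR (map f L).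
Proof. induction L as [|x L IH]; simpl; [ring | rewrite IH; ring]. Qed.

Lemma sumR_map_0 {A} (L : list A) : sumR (map (fun _ => 0) L) = 0.
Proof. induction L as [|x L IH]; simpl; [reflexivity | rewrite IH; ring]. Qed.

Lemma sumR_map_sum1n {A} (F : nat -> A -> R) m L :
  sumR (map (fun x => sum1n (fun h => F h x) m) L) = sum1n (fun h => sumR (map (F h) L)) m.
Proof.
  induction m as [|m IH]; cbn [sum1n]; [apply sumR_map_0|].
  rewrite sumR_map_plus, IH. reflexivity.
Qed.

Lemma sumR_map_sum_f_R0 {A} (F : nat -> A -> R) m L :
  sumR (map (fun x => sum_f_R0 (fun d => F d x) m) L) = sum_f_R0 (fun d => sumR (map (F d) L)) m.
Proof.
  induction m as [|m IH]; cbn [sum_f_R0]; [reflexivity|].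
  rewrite sumR_map_plus, IH. reflexivity.
Qed.

Lemma sum_f_R0_indicator g m N :
  (m <= N)%nat -> sum_f_R0 (fun d => if Nat.eqb d m then g else 0) N = g.
Proof.
  induction N as [|N IH]; intros Hm.
  - replace m with O by lia. reflexivity.
  - rewrite tech5. destruct (Nat.eq_dec m (S N)) as [->|Hne].
    + rewrite Nat.eqb_refl, sum_eq_R0; [ring|].
      intros d Hd. destruct (Nat.eqb_spec d (S N)); [lia | reflexivity].
    + rewrite IH by lia. destruct (Nat.eqb_spec (S N) m); [lia | ring].
Qed.

Lemma sum_f_R0_trunc f m N :
  (forall d, (m < d)%nat -> f d = 0) -> (m <= N)%nat -> sum_f_R0 f N = sum_f_R0 f m.
Proof.
  intros Hf. induction N as [|N IH]; intros HN.
  - replace m with O by lia. reflexivity.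
  - destruct (Nat.eq_dec m (S N)) as [->|Hne]; [reflexivity|].
    rewrite tech5, IH, Hf by lia. ring.
Qed.

Lemma sum_f_R0_telescope (u : nat -> R) n :
  sum_f_R0 (fun i => u (S i) - u i) n = u (S n) - u O.
Proof. induction n as [|n IH]; cbn [sum_f_R0]; [reflexivity | rewrite IH; ring]. Qed.

Lemma is_lim_seq_sum_f_R0 (F : nat -> nat -> R) (L : nat -> R) m :
  (forall d, (d <= m)%nat -> is_lim_seq (fun n => F n d) (L d)) ->
  is_lim_seq (fun n => sum_f_R0 (F n) m) (sum_f_R0 L m).
Proof.
  induction m as [|m IH]; intros HF; [apply HF; lia|].
  apply is_lim_seq_plus'; [apply IH; intros; apply HF | apply HF]; lia.
Qed.

Lemma is_lim_seq_inv_INR_S : is_lim_seq (fun n => / INR (S n)) 0.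
Proof.
  apply (is_lim_seq_inv _ p_infty); [|discriminate].
  apply (is_lim_seq_incr_1 INR), is_lim_seq_INR.
Qed.

(* Reduced to the weighted [Cesaro] lemma of the standard library, with weights
   [b (S n) - b n] and the difference quotients as terms. *)
Lemma stolz_cesaro (a b : nat -> R) (l : R) :
  (forall n, b n < b (S n)) -> is_lim_seq b p_infty ->
  is_lim_seq (fun n => (a (S n) - a n) / (b (S n) - b n)) l ->
  is_lim_seq (fun n => a n / b n) l.
Proof.
  intros Hinc Hb Hl.
  set (db n := b (S n) - b n).
  assert (Hdb : forall n, 0 < db n) by (intros n; specialize (Hinc n); unfold db; lra).
  assert (Hb1 : is_lim_seq (fun n => b (S n)) p_infty) by (apply (is_lim_seq_incr_1 b), Hb).
  assert (Hquot : is_lim_seq (fun n => (a (S n) - a O) / (b (S n) - b O)) l).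
  { apply (is_lim_seq_ext
      (fun n => sum_f_R0 (fun i => db i * ((a (S i) - a i) / db i)) n / sum_f_R0 db n)).
    - intros n. rewrite (sum_eq _ (fun i => a (S i) - a i)).
      + unfold db. rewrite !sum_f_R0_telescope. reflexivity.
      + intros i _. specialize (Hdb i). field. lra.
    - apply is_lim_seq_Reals, Cesaro; [apply is_lim_seq_Reals, Hl | exact Hdb |].
      apply is_lim_seq_p_infty_Reals.
      apply (is_lim_seq_ext (fun n => b (S n) - b O)); [intros n; symmetry; apply sum_f_R0_telescope|].
      apply (is_lim_seq_minus _ _ p_infty (b O)); [exact Hb1 | apply is_lim_seq_const | reflexivity]. }
  assert (Hmono : forall n, b O < b (S n)).
  { induction n as [|n IH]; [apply Hinc | specialize (Hinc (S n)); lra]. }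
  assert (Hinv : is_lim_seq (fun n => / b (S n)) 0)
    by (apply (is_lim_seq_inv _ p_infty); [exact Hb1 | discriminate]).
  apply (is_lim_seq_incr_1 (fun n => a n / b n)).
  apply (is_lim_seq_ext_loc
    (fun n => (a (S n) - a O) / (b (S n) - b O) * (1 - b O * / b (S n)) + a O * / b (S n))).
  - apply is_lim_seq_spec in Hb1. destruct (Hb1 0) as [N HN].
    exists N. intros n Hn. specialize (HN n Hn). specialize (Hmono n). field. lra.
  - replace (Finite l) with (Finite (l * (1 - b O * 0) + a O * 0)) by (f_equal; ring).
    apply is_lim_seq_plus'; [apply is_lim_seq_mult'; [exact Hquot|] | ].
    + apply is_lim_seq_minus'; [apply is_lim_seq_const|].
      apply is_lim_seq_mult'; [apply is_lim_seq_const | exact Hinv].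
    + apply is_lim_seq_mult'; [apply is_lim_seq_const | exact Hinv].
Qed.

(* Dividing by [c ^ k] turns the recursion into a Stolz–Cesàro quotient. *)
Lemma affine_recursion_limit (b y : nat -> R) (c Y : R) :
  0 < c < 1 -> (forall k, b (S k) = c * (b k + y k)) -> is_lim_seq y Y ->
  is_lim_seq b (Y / (/ c - 1)).
Proof.
  intros Hc Hrec Hy.
  assert (Hq : 1 < / c) by (rewrite <- Rinv_1; apply Rinv_lt_contravar; lra).
  assert (Hqk : forall k, 0 < (/ c) ^ k) by (intros k; apply pow_lt; lra).
  apply (is_lim_seq_ext (fun k => (b k * (/ c) ^ k) / (/ c) ^ k)).
  { intros k. specialize (Hqk k). field. lra. }
  apply stolz_cesaro.
  - intros n. simpl. rewrite <- (Rmult_1_l ((/ c) ^ n)) at 1.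
    apply Rmult_lt_compat_r; [apply Hqk | exact Hq].
  - apply is_lim_seq_geom_p. exact Hq.
  - apply (is_lim_seq_ext (fun k => y k / (/ c - 1))).
    + intros k. specialize (Hqk k). simpl. rewrite Hrec.
      assert (0 < (/ c) ^ k * (1 - c)) by (apply Rmult_lt_0_compat; lra).
      field. repeat split; lra.
    + apply is_lim_seq_div'; [exact Hy | apply is_lim_seq_const | lra].
Qed.

Lemma INR_S_le_exp_harmonic n : INR (S n) <= exp (sum1n (fun a => / INR a) n).
Proof.
  induction n as [|n IH]; simpl sum1n.
  - rewrite exp_0. simpl. lra.
  - rewrite exp_plus.
    assert (Hpos : 0 < INR (S n)) by (apply lt_0_INR; lia).
    assert (Hexp : 1 + / INR (S n) <= exp (/ INR (S n))).
    { left. apply exp_ineq1. apply Rinv_neq_0_compat. lra. }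
    replace (INR (S (S n))) with (INR (S n) * (1 + / INR (S n)))
      by (rewrite (S_INR (S n)); field; lra).
    apply Rmult_le_compat; [lra | | exact IH | exact Hexp].
    assert (0 < / INR (S n)) by (apply Rinv_0_lt_compat; lra). lra.
Qed.

Lemma harmonic_diverges : is_lim_seq (sum1n (fun a => / INR a)) p_infty.
Proof.
  apply (is_lim_seq_le_p_loc (fun n => ln (INR (S n)))).
  - exists O. intros n _. rewrite <- (ln_exp (sum1n _ n)).
    apply ln_le; [apply lt_0_INR; lia | apply INR_S_le_exp_harmonic].
  - apply (is_lim_comp_seq ln (fun n => INR (S n)) p_infty p_infty is_lim_ln_p).
    + exists O. intros n _. discriminate.
    + apply (is_lim_seq_incr_1 INR), is_lim_seq_INR.
Qed.

(** * Weights of weakly decreasing sequences by number of distinct values *)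

Fixpoint runs (l : list nat) : nat :=
  match l with
  | [] => 0
  | x :: t => match t with [] => 1 | y :: _ => (if Nat.eqb x y then 0 else 1) + runs t end
  end.

Lemma sigma_add_runs l : (Defs.sigma l + runs l)%nat = length l.
Proof.
  induction l as [|x [|y t] IH]; [reflexivity | reflexivity |].
  change (Defs.sigma (x :: y :: t)) with ((if Nat.eqb x y then 1 else 0) + Defs.sigma (y :: t))%nat.
  change (runs (x :: y :: t)) with ((if Nat.eqb x y then 0 else 1) + runs (y :: t))%nat.
  simpl length. destruct (Nat.eqb x y); simpl in *; lia.
Qed.

Definition runs_weight (d : nat) (l : list nat) : R :=
  if nonincb l && Nat.eqb (runs l) d then weight l else 0.

(* [run_mass n k d] is the total weight of the sequences [n >= l_1 >= ... >= l_k >= 1]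
   taking exactly [d] distinct values.  Splitting off the leading block of entries equal
   to [n + 1], [lead_mass (run_mass n) (/ INR (S n)) k d] is the weight of those of
   length [k] with entries at most [n + 1] and [l_1 = n + 1]. *)
Fixpoint lead_mass (A : nat -> nat -> R) (x : R) (k d : nat) : R :=
  match k with
  | O => 0
  | S k' => x * (lead_mass A x k' d + match d with O => 0 | S d' => A k' d' end)
  end.

Fixpoint run_mass (n k d : nat) : R :=
  match n with
  | O => if Nat.eqb k 0 && Nat.eqb d 0 then 1 else 0
  | S m => run_mass m k d + lead_mass (run_mass m) (/ INR (S m)) k d
  end.

Lemma run_mass_len0 n d : run_mass n 0 d = if Nat.eqb d 0 then 1 else 0.
Proof. induction n as [|n IH]; simpl; [reflexivity | rewrite IH; ring]. Qed.

Lemma run_mass_sum_lead n k d :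
  run_mass n (S k) d = sum1n (fun a => lead_mass (run_mass (pred a)) (/ INR a) (S k) d) n.
Proof. induction n as [|n IH]; [reflexivity|]. cbn [run_mass sum1n pred]. rewrite IH. reflexivity. Qed.

Lemma runs_weight_nil d : runs_weight d [] = if Nat.eqb d 0 then 1 else 0.
Proof. destruct d; reflexivity. Qed.

Lemma runs_weight_single a d : runs_weight d [a] = if Nat.eqb d 1 then / INR a else 0.
Proof. unfold runs_weight, weight. destruct d as [|[|d]]; simpl; ring. Qed.

Lemma runs_weight_cons2 a h t d :
  runs_weight d (a :: h :: t) =
  / INR a * ((if Nat.ltb h a then match d with O => 0 | S d' => runs_weight d' (h :: t) end else 0)
             + (if Nat.eqb h a then runs_weight d (h :: t) else 0)).
Proof.
  unfold runs_weight.
  change (nonincb (a :: h :: t)) with (Nat.leb h a && nonincb (h :: t)).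
  change (runs (a :: h :: t)) with ((if Nat.eqb a h then 0 else 1) + runs (h :: t))%nat.
  change (weight (a :: h :: t)) with (/ INR a * weight (h :: t)).
  remember (runs (h :: t)) as r. remember (weight (h :: t)) as w.
  destruct (Nat.ltb_spec h a), (Nat.leb_spec h a), (Nat.eqb_spec h a), (Nat.eqb_spec a h);
    try lia; destruct (nonincb (h :: t)), d; simpl; try destruct (Nat.eqb r _); ring.
Qed.

Lemma tuples_S_sum (F : list nat -> R) n k :
  sumR (map F (tuples n (S k))) = sumR (map (fun t => sum1n (fun a => F (a :: t)) n) (tuples n k)).
Proof.
  simpl. rewrite sumR_map_flat_map. apply sumR_map_ext_in. intros t _.
  rewrite map_map. apply sumR_map_seq1.
Qed.

Lemma tuples_length n k l : In l (tuples n k) -> length l = k.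
Proof.
  revert l. induction k as [|k IH]; simpl; intros l Hl.
  - destruct Hl as [<-|[]]. reflexivity.
  - apply in_flat_map in Hl. destruct Hl as [t [Ht Hl]].
    apply in_map_iff in Hl. destruct Hl as [a [<- _]]. simpl. rewrite (IH t Ht). reflexivity.
Qed.

Lemma runs_weight_sum_cons n k a d : (1 <= a <= n)%nat ->
  sumR (map (fun t => runs_weight d (a :: t)) (tuples n (S k))) =
  / INR a * (sum1n (fun h => if Nat.ltb h a then match d with O => 0 | S d' =>
                 sumR (map (fun t => runs_weight d' (h :: t)) (tuples n k)) end else 0) n
             + sumR (map (fun t => runs_weight d (a :: t)) (tuples n k))).
Proof.
  intros Ha.
  rewrite tuples_S_sum, (sumR_map_sum1n (fun h t => runs_weight d (a :: h :: t))).
  rewrite <- (sum1n_indicator (sumR (map (fun t => runs_weight d (a :: t)) (tuples n k))) a n Ha).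
  rewrite <- sum1n_plus, <- sum1n_scal. apply sum1n_ext_in. intros h _.
  rewrite (sumR_map_ext_in _ _ _ (fun t _ => runs_weight_cons2 a h t d)).
  rewrite sumR_map_scal, sumR_map_plus. f_equal. f_equal.
  - destruct (Nat.ltb h a); [destruct d|]; auto using sumR_map_0.
  - destruct (Nat.eqb_spec h a) as [->|_]; auto using sumR_map_0.
Qed.

Lemma lead_runs_weight_sum n k a d : (1 <= a <= n)%nat ->
  sumR (map (fun t => runs_weight d (a :: t)) (tuples n k)) =
  lead_mass (run_mass (pred a)) (/ INR a) (S k) d.
Proof.
  revert a d. induction k as [|k IH]; intros a d Ha.
  - simpl. rewrite runs_weight_single.
    destruct d as [|[|d]]; rewrite ?run_mass_len0; simpl; ring.
  - rewrite runs_weight_sum_cons, IH by exact Ha.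
    change (lead_mass (run_mass (pred a)) (/ INR a) (S (S k)) d) with
      (/ INR a * (lead_mass (run_mass (pred a)) (/ INR a) (S k) d
                  + match d with O => 0 | S d' => run_mass (pred a) (S k) d' end)).
    destruct d as [|d].
    + rewrite (sum1n_ext_in _ (fun _ => 0)), sum1n_0; [ring|].
      intros h _. destruct (Nat.ltb h a); reflexivity.
    + rewrite (sum1n_ext_in _ (fun h => if Nat.ltb h a then
                 lead_mass (run_mass (pred h)) (/ INR h) (S k) d else 0))
        by (intros h Hh; rewrite IH by lia; reflexivity).
      rewrite sum1n_lt, run_mass_sum_lead by lia. ring.
Qed.

Lemma runs_weight_sum n k d : sumR (map (runs_weight d) (tuples n k)) = run_mass n k d.
Proof.
  destruct k as [|k].
  - simpl. rewrite runs_weight_nil, run_mass_len0. ring.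
  - rewrite tuples_S_sum, (sumR_map_sum1n (fun a t => runs_weight d (a :: t))), run_mass_sum_lead.
    apply sum1n_ext_in. intros a Ha. apply lead_runs_weight_sum. lia.
Qed.

Lemma theta_coef_run_mass n k j :
  theta_coef n k j = if Nat.leb j k then run_mass n k (k - j) else 0.
Proof.
  unfold theta_coef, wdec. rewrite !sumR_map_filter.
  rewrite (sumR_map_ext_in _ (fun l => if Nat.leb j k then runs_weight (k - j) l else 0)).
  - destruct (Nat.leb j k); [apply runs_weight_sum | apply sumR_map_0].
  - intros l Hl. pose proof (sigma_add_runs l). rewrite (tuples_length _ _ _ Hl) in H.
    unfold runs_weight. destruct (nonincb l), (Nat.leb_spec j k),
      (Nat.eqb_spec (Defs.sigma l) j), (Nat.eqb_spec (runs l) (k - j)); simpl; auto; lia.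
Qed.

Lemma theta1_run_mass n k : theta1 n k = sum_f_R0 (run_mass n k) k.
Proof.
  unfold theta1, wdec. rewrite sumR_map_filter.
  rewrite (sumR_map_ext_in _ (fun l => sum_f_R0 (fun d => runs_weight d l) k)).
  - rewrite sumR_map_sum_f_R0. apply sum_eq. intros d _. apply runs_weight_sum.
  - intros l Hl. pose proof (sigma_add_runs l). rewrite (tuples_length _ _ _ Hl) in H.
    unfold runs_weight. destruct (nonincb l); simpl.
    + rewrite (sum_eq _ (fun d => if Nat.eqb d (runs l) then weight l else 0)).
      * symmetry. apply sum_f_R0_indicator. lia.
      * intros d _. rewrite Nat.eqb_sym. reflexivity.
    + symmetry. apply sum_eq_R0. reflexivity.
Qed.

Lemma decb_nonincb_sigma l : decb l = nonincb l && Nat.eqb (Defs.sigma l) 0.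
Proof.
  induction l as [|x [|y t] IH]; [reflexivity | reflexivity |].
  change (decb (x :: y :: t)) with (Nat.ltb y x && decb (y :: t)).
  change (nonincb (x :: y :: t)) with (Nat.leb y x && nonincb (y :: t)).
  change (Defs.sigma (x :: y :: t)) with ((if Nat.eqb x y then 1 else 0) + Defs.sigma (y :: t))%nat.
  rewrite IH.
  destruct (Nat.ltb_spec y x), (Nat.leb_spec y x), (Nat.eqb_spec x y); try lia;
    destruct (nonincb (y :: t)); reflexivity.
Qed.

Lemma zeta1_run_mass m r : zeta1 m r = run_mass m r r.
Proof.
  unfold zeta1. rewrite sumR_map_filter, <- runs_weight_sum.
  apply sumR_map_ext_in. intros l Hl. pose proof (sigma_add_runs l).
  rewrite (tuples_length _ _ _ Hl) in H. rewrite decb_nonincb_sigma. unfold runs_weight.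
  destruct (nonincb l), (Nat.eqb_spec (Defs.sigma l) 0), (Nat.eqb_spec (runs l) r); simpl; auto; lia.
Qed.

Lemma inv_INR_nonneg a : 0 <= / INR a.
Proof.
  destruct a as [|a]; [rewrite INR_0, Rinv_0; lra|].
  left. apply Rinv_0_lt_compat, lt_0_INR. lia.
Qed.

Lemma lead_mass_nonneg A x k d :
  (forall k d, 0 <= A k d) -> 0 <= x -> 0 <= lead_mass A x k d.
Proof.
  intros HA Hx. induction k as [|k IH]; simpl; [lra|].
  apply Rmult_le_pos; [exact Hx|]. destruct d; [lra | specialize (HA k d); lra].
Qed.

Lemma run_mass_nonneg n k d : 0 <= run_mass n k d.
Proof.
  revert k d. induction n as [|n IH]; intros k d; cbn [run_mass].
  - destruct (_ && _); lra.
  - pose proof (lead_mass_nonneg (run_mass n) (/ INR (S n)) k d IH (inv_INR_nonneg _)).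
    specialize (IH k d). lra.
Qed.

Lemma lead_mass_eq0_len A x k d :
  (forall k d, (k < d)%nat -> A k d = 0) -> (k < d)%nat -> lead_mass A x k d = 0.
Proof.
  intros HA. induction k as [|k IH]; intros Hk; simpl; [reflexivity|].
  rewrite IH by lia. destruct d as [|d]; [lia|]. rewrite HA by lia. ring.
Qed.

Lemma run_mass_eq0_len n k d : (k < d)%nat -> run_mass n k d = 0.
Proof.
  revert k d. induction n as [|n IH]; intros k d Hk; cbn [run_mass].
  - destruct d; [lia|]. destruct (Nat.eqb k 0); reflexivity.
  - rewrite IH, lead_mass_eq0_len; auto. ring.
Qed.

Lemma lead_mass_eq0_values A x k d :
  (forall k, A k d = 0) -> lead_mass A x k (S d) = 0.
Proof. intros HA. induction k as [|k IH]; simpl; [reflexivity|]. rewrite IH, HA. ring. Qed.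

Lemma run_mass_eq0_values n k d : (n < d)%nat -> run_mass n k d = 0.
Proof.
  revert k d. induction n as [|n IH]; intros k d Hd; cbn [run_mass].
  - destruct d; [lia|]. destruct (Nat.eqb k 0); reflexivity.
  - destruct d as [|d]; [lia|].
    rewrite IH by lia. rewrite lead_mass_eq0_values by (intros; apply IH; lia). ring.
Qed.

Lemma run_mass_mono n m k d : (n <= m)%nat -> run_mass n k d <= run_mass m k d.
Proof.
  induction 1 as [|m _ IH]; [lra|]. cbn [run_mass].
  pose proof (lead_mass_nonneg (run_mass m) (/ INR (S m)) k d
    (run_mass_nonneg m) (inv_INR_nonneg _)). lra.
Qed.

Lemma run_mass_diag_S n k :
  run_mass (S n) (S k) (S k) = run_mass n (S k) (S k) + / INR (S n) * run_mass n k k.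
Proof.
  cbn [run_mass lead_mass]. rewrite lead_mass_eq0_len by (auto using run_mass_eq0_len).
  ring.
Qed.

Lemma run_mass_diag_pos n k : (k <= n)%nat -> 0 < run_mass n k k.
Proof.
  revert n. induction k as [|k IH]; intros n Hk.
  - rewrite run_mass_len0. simpl. lra.
  - destruct n as [|n]; [lia|]. rewrite run_mass_diag_S.
    pose proof (run_mass_nonneg n (S k) (S k)).
    assert (0 < / INR (S n) * run_mass n k k).
    { apply Rmult_lt_0_compat; [apply Rinv_0_lt_compat, lt_0_INR; lia | apply IH; lia]. }
    lra.
Qed.

(** * The law of D_n and part (i) *)

Lemma INR_mul_PD_S n d :
  INR (S n) * PD (S n) d = INR n * PD n d + match d with O => 0 | S d' => PD n d' end.
Proof.
  assert (HS : 0 < INR (S n)) by (apply lt_0_INR; lia).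
  cbn [PD]. rewrite (S_INR n). rewrite S_INR in HS. destruct d; field; lra.
Qed.

Lemma INR_mul_PD_0 n : INR n * PD n 0 = 0.
Proof.
  induction n as [|n IH]; [rewrite INR_0; ring|]. rewrite INR_mul_PD_S, IH. ring.
Qed.

Lemma INR_mul_PD_run_mass n r : INR (S n) * PD (S n) (S r) = run_mass n r r.
Proof.
  revert r. induction n as [|n IH]; intros r.
  - rewrite INR_mul_PD_S, INR_0. destruct r; simpl; ring.
  - rewrite INR_mul_PD_S, IH. destruct r as [|r].
    + assert (H0 := INR_mul_PD_0 (S n)).
      assert (PD (S n) 0 = 0) as -> by (apply (Rmult_eq_reg_l (INR (S n))); [lra | apply not_0_INR; lia]).
      rewrite !run_mass_len0. simpl. ring.
    + rewrite run_mass_diag_S, <- (IH r). field. apply not_0_INR. lia.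
Qed.

Lemma PD_sum n N : (n <= N)%nat -> sum_f_R0 (PD n) N = 1.
Proof.
  revert N. induction n as [|n IH]; intros N HN.
  - rewrite (sum_eq _ (fun d => if Nat.eqb d 0 then 1 else 0)) by reflexivity.
    apply sum_f_R0_indicator. lia.
  - destruct N as [|N]; [lia|].
    set (c := / INR (S n)).
    rewrite (sum_eq _ (fun d => PD n d * (1 - c) + match d with O => 0 | S d' => PD n d' * c end)).
    2: { intros [|d] _; cbn [PD]; unfold c; ring. }
    rewrite sum_plus, <- scal_sum, IH, decomp_sum by lia.
    simpl pred. rewrite <- scal_sum, IH by lia. ring.
Qed.

Lemma run_mass_one k d : run_mass 1 (S k) d = if Nat.eqb d 1 then 1 else 0.
Proof.
  change (run_mass 1 (S k) d) with (0 + lead_mass (run_mass 0) (/ INR 1) (S k) d).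
  rewrite Rplus_0_l. simpl INR. rewrite Rinv_1.
  induction k as [|k IH]; [destruct d as [|[|d]]; simpl; ring|].
  change (lead_mass (run_mass 0) 1 (S (S k)) d) with
    (1 * (lead_mass (run_mass 0) 1 (S k) d + match d with O => 0 | S d' => run_mass 0 (S k) d' end)).
  rewrite IH. destruct d; simpl; ring.
Qed.

Lemma run_mass_limit n d : (1 <= n)%nat ->
  is_lim_seq (fun k => run_mass n k d) (INR n * PD n d).
Proof.
  intros Hn. revert d. induction n as [|n IH]; intros d; [lia|].
  destruct n as [|n].
  - rewrite INR_mul_PD_S, INR_0, Rmult_0_l, Rplus_0_l.
    apply (is_lim_seq_ext_loc (fun _ => match d with O => 0 | S d' => PD 0 d' end));
      [|apply is_lim_seq_const].
    exists 1%nat. intros [|k] Hk; [lia|]. rewrite run_mass_one.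
    destruct d as [|[|d]]; simpl; ring.
  - rewrite INR_mul_PD_S.
    apply (is_lim_seq_plus' (fun k => run_mass (S n) k d)); [apply IH; lia|].
    replace (match d with O => 0 | S d' => PD (S n) d' end)
      with ((match d with O => 0 | S d' => INR (S n) * PD (S n) d' end) / (/ / INR (S (S n)) - 1)).
    + apply (affine_recursion_limit _ (fun k => match d with O => 0 | S d' => run_mass (S n) k d' end)).
      * split; [apply Rinv_0_lt_compat, lt_0_INR; lia|].
        rewrite <- Rinv_1. apply Rinv_lt_contravar.
        -- rewrite Rmult_1_l. apply lt_0_INR. lia.
        -- apply (lt_INR 1). lia.
      * intros k. reflexivity.
      * destruct d as [|d]; [apply is_lim_seq_const | apply IH; lia].
    + rewrite Rinv_inv, (S_INR (S n)).
      assert (0 < INR (S n)) by (apply lt_0_INR; lia).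
      destruct d; field; lra.
Qed.

Lemma theta1_limit n : (1 <= n)%nat -> is_lim_seq (fun k => theta1 n k) (INR n).
Proof.
  intros Hn.
  apply (is_lim_seq_ext_loc (fun k => sum_f_R0 (run_mass n k) n)).
  - exists n. intros k Hk. rewrite theta1_run_mass. symmetry.
    apply sum_f_R0_trunc; [intros; apply run_mass_eq0_values|]; lia.
  - replace (INR n) with (sum_f_R0 (fun d => INR n * PD n d) n).
    + apply is_lim_seq_sum_f_R0. intros d _. apply run_mass_limit. exact Hn.
    + rewrite (sum_eq _ (fun d => PD n d * INR n)) by (intros; ring).
      rewrite <- scal_sum, PD_sum by lia. ring.
Qed.

Lemma PkminusS_limit n l : (1 <= n)%nat -> is_lim_seq (fun k => PkminusS n k l) (PD n l).
Proof.
  intros Hn.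
  apply (is_lim_seq_ext_loc (fun k => run_mass n k l / theta1 n k)).
  - exists l. intros k Hk. unfold PkminusS, PS.
    rewrite (proj2 (Nat.leb_le l k)), theta_coef_run_mass, (proj2 (Nat.leb_le (k - l) k)) by lia.
    replace (k - (k - l))%nat with l by lia. reflexivity.
  - assert (HnR : INR n <> 0) by (apply not_0_INR; lia).
    replace (PD n l) with (INR n * PD n l / INR n) by (field; exact HnR).
    apply is_lim_seq_div'; [apply run_mass_limit | apply theta1_limit | ]; assumption.
Qed.

Lemma PD_law n l : (1 <= l <= n)%nat -> PD n l = zeta1 (n - 1) (l - 1) / INR n.
Proof.
  intros Hl. destruct n as [|n], l as [|r]; try lia.
  rewrite zeta1_run_mass, !Nat.sub_succ, !Nat.sub_0_r, <- INR_mul_PD_run_mass.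
  field. apply not_0_INR. lia.
Qed.

(** * Part (ii) *)

(* The diagonal gains [run_mass n K K / (n + 1) >= run_mass K K K / (n + 1)] at each step,
   so it grows at least like a tail of the harmonic series. *)
Lemma run_mass_diag_diverges K : is_lim_seq (fun n => run_mass n (S K) (S K)) p_infty.
Proof.
  set (H := sum1n (fun a => / INR a)).
  set (c0 := run_mass K K K).
  assert (Hc0 : 0 < c0) by (apply run_mass_diag_pos; lia).
  assert (Hbound : forall p, c0 * (H (K + p)%nat - H K) <= run_mass (K + p) (S K) (S K)).
  { induction p as [|p IH].
    - rewrite Nat.add_0_r, Rminus_diag, Rmult_0_r. apply run_mass_nonneg.
    - rewrite Nat.add_succ_r, run_mass_diag_S. unfold H. cbn [sum1n]. fold H.
      assert (c0 * / INR (S (K + p)) <= / INR (S (K + p)) * run_mass (K + p) K K).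
      { rewrite Rmult_comm. apply Rmult_le_compat_l; [apply inv_INR_nonneg|].
        apply run_mass_mono. lia. }
      lra. }
  apply (is_lim_seq_le_p_loc (fun n => c0 * (H n - H K))).
  - exists K. intros n Hn. replace n with (K + (n - K))%nat by lia. apply Hbound.
  - apply (is_lim_seq_mult _ _ c0 p_infty); [apply is_lim_seq_const | |].
    + apply (is_lim_seq_minus _ _ p_infty (H K)); [apply harmonic_diverges | apply is_lim_seq_const | reflexivity].
    + apply is_Rbar_mult_sym, is_Rbar_mult_p_infty_pos. exact Hc0.
Qed.

Lemma lead_mass_ratio_vanishes K d :
  (forall j d', (j <= K)%nat -> (d' < K)%nat ->
     is_lim_seq (fun n => run_mass n j d' / run_mass n K K) 0) ->
  (d < S K)%nat -> forall j, (j <= S K)%nat ->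
  is_lim_seq (fun n => lead_mass (run_mass n) (/ INR (S n)) j d / (/ INR (S n) * run_mass n K K)) 0.
Proof.
  intros Hratio Hd j. induction j as [|j IH]; intros Hj.
  - apply (is_lim_seq_ext (fun _ => 0)); [intros n; simpl; unfold Rdiv; ring | apply is_lim_seq_const].
  - apply (is_lim_seq_ext_loc (fun n =>
      match d with O => 0 | S d' => run_mass n j d' / run_mass n K K end
      + / INR (S n) * (lead_mass (run_mass n) (/ INR (S n)) j d / (/ INR (S n) * run_mass n K K)))).
    + exists K. intros n Hn. cbn [lead_mass].
      assert (0 < run_mass n K K) by (apply run_mass_diag_pos; lia).
      assert (0 < INR (S n)) by (apply lt_0_INR; lia).
      destruct d; field; lra.
    + replace (Finite 0) with (Finite (0 + 0 * 0)) by (f_equal; ring).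
      apply is_lim_seq_plus'.
      * destruct d as [|d']; [apply is_lim_seq_const | apply Hratio; lia].
      * apply is_lim_seq_mult'; [apply is_lim_seq_inv_INR_S | apply IH; lia].
Qed.

(* Stolz–Cesàro in [n]: the increments of [run_mass n j d] are [lead_mass] terms. *)
Lemma run_mass_ratio_vanishes K j d : (j <= K)%nat -> (d < K)%nat ->
  is_lim_seq (fun n => run_mass n j d / run_mass n K K) 0.
Proof.
  revert j d. induction K as [|K IH]; intros j d Hj Hd; [lia|].
  apply (is_lim_seq_incr_n _ K), stolz_cesaro.
  - intros n. rewrite Nat.add_succ_l, run_mass_diag_S.
    assert (0 < / INR (S (n + K)) * run_mass (n + K) K K).
    { apply Rmult_lt_0_compat; [apply Rinv_0_lt_compat, lt_0_INR | apply run_mass_diag_pos]; lia. }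
    lra.
  - apply (is_lim_seq_incr_n (fun n => run_mass n (S K) (S K)) K), run_mass_diag_diverges.
  - apply (is_lim_seq_ext (fun n => lead_mass (run_mass (n + K)) (/ INR (S (n + K))) j d
                                     / (/ INR (S (n + K)) * run_mass (n + K) K K))).
    + intros n. rewrite Nat.add_succ_l, run_mass_diag_S. cbn [run_mass]. f_equal; ring.
    + apply (is_lim_seq_incr_n (fun n => lead_mass (run_mass n) (/ INR (S n)) j d
                                          / (/ INR (S n) * run_mass n K K)) K).
      apply lead_mass_ratio_vanishes; assumption.
Qed.

Lemma run_mass_diag_le_theta1 n k : run_mass n k k <= theta1 n k.
Proof.
  rewrite theta1_run_mass. destruct k as [|k]; simpl sum_f_R0; [lra|].
  pose proof (cond_pos_sum (run_mass n (S k)) k (run_mass_nonneg n (S k))). lra.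
Qed.

Lemma run_mass_ratio_limit k d : (d <= k)%nat ->
  is_lim_seq (fun n => run_mass n k d / run_mass n k k) (Finite (if Nat.eqb d k then 1 else 0)).
Proof.
  intros Hd. destruct (Nat.eqb_spec d k) as [->|Hdk].
  - apply (is_lim_seq_ext_loc (fun _ => 1)); [|apply is_lim_seq_const].
    exists k. intros n Hn. assert (0 < run_mass n k k) by (apply run_mass_diag_pos; lia).
    field. lra.
  - apply run_mass_ratio_vanishes; lia.
Qed.

Lemma theta1_ratio_limit k :
  is_lim_seq (fun n => theta1 n k / run_mass n k k) 1.
Proof.
  apply (is_lim_seq_ext (fun n => sum_f_R0 (fun d => run_mass n k d / run_mass n k k) k)).
  - intros n. rewrite theta1_run_mass. unfold Rdiv. rewrite Rmult_comm, scal_sum. reflexivity.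
  - rewrite <- (sum_f_R0_indicator 1 k k) by lia.
    apply is_lim_seq_sum_f_R0. intros d Hd. apply run_mass_ratio_limit. exact Hd.
Qed.

Lemma theta_coef_ratio_limit k j :
  is_lim_seq (fun n => theta_coef n k j / run_mass n k k) (Finite (if Nat.eqb j 0 then 1 else 0)).
Proof.
  destruct (Nat.leb_spec j k) as [Hjk|Hjk].
  - apply (is_lim_seq_ext (fun n => run_mass n k (k - j) / run_mass n k k)).
    + intros n. rewrite theta_coef_run_mass, (proj2 (Nat.leb_le j k) Hjk). reflexivity.
    + replace (Nat.eqb j 0) with (Nat.eqb (k - j) k)
        by (destruct (Nat.eqb_spec j 0), (Nat.eqb_spec (k - j) k); auto; lia).
      apply run_mass_ratio_limit. lia.
  - apply (is_lim_seq_ext (fun _ => 0)).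
    + intros n. rewrite theta_coef_run_mass, (proj2 (Nat.leb_nle j k)) by lia. unfold Rdiv. ring.
    + destruct (Nat.eqb_spec j 0); [lia | apply is_lim_seq_const].
Qed.

Lemma PS_limit k j :
  is_lim_seq (fun n => PS n k j) (Finite (if Nat.eqb j 0 then 1 else 0)).
Proof.
  apply (is_lim_seq_ext_loc (fun n => (theta_coef n k j / run_mass n k k) / (theta1 n k / run_mass n k k))).
  - exists k. intros n Hn. unfold PS.
    assert (0 < run_mass n k k) by (apply run_mass_diag_pos; lia).
    pose proof (run_mass_diag_le_theta1 n k). field. lra.
  - replace (Finite (if Nat.eqb j 0 then 1 else 0)) with
      (Finite ((if Nat.eqb j 0 then 1 else 0) / 1)) by (f_equal; field).
    apply is_lim_seq_div'; [apply theta_coef_ratio_limit | apply theta1_ratio_limit | lra].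
Qed.

Theorem mainTheorem14 :
  (forall n : nat, (1 <= n)%nat ->
     (forall l : nat, Un_cv (fun k => PkminusS n k l) (PD n l)) /\
     (forall l : nat, (1 <= l <= n)%nat ->
        PD n l = zeta1 (n - 1) (l - 1) / INR n)) /\
  (forall k : nat, (1 <= k)%nat ->
     forall j : nat, Un_cv (fun n => PS n k j) (if Nat.eqb j 0 then 1 else 0)).
Proof.
  split.
  - intros n Hn. split.
    + intros l. apply is_lim_seq_Reals, PkminusS_limit, Hn.
    + intros l Hl. apply PD_law, Hl.
  - intros k _ j. apply is_lim_seq_Reals, PS_limit.
Qed.
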